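(* Let $(E,\mathcal L)$ be a local representation over an infinite set $B$, and let $X\mapsto{}^*X$ be the nonstandard analysis induced by it (cylindrical ultrapower). Then: (i) $X\mapsto{}^*X$ is a $|B|$-confined nonstandard analysis. (ii) If $X\mapsto{}^{\circ}X$ is a $|B|$-confined nonstandard analysis whose induced local representation on $B$ is isomorphic to $(E,\mathcal L)$ (we then identify ${}^{\circ}B=E$), then the following maps are well defined, natural in $X$, and mutually inverse, so the two nonstandard analyses are naturally isomorphic: $\alpha_X:{}^*X\to{}^{\circ}X$: if $\phi:B^E\to X$ represents an element and $\phi(\psi)=f(\psi_{e_1},\dots,\psi_{e_n})$ with $e_1,\dots,e_n\in E$, $f:B^n\to X$, then $\alpha_X([\phi])={}^{\circ}f(e_1,\dots,e_n)$; $\gamma_X:{}^{\circ}X\to{}^*X$: for $x\in{}^{\circ}X$ choose $f:B\to X$ and $e\in E$ with $x={}^{\circ}f(e)$ (possible by $|B|$-confinement), and set $\gamma_X(x)=$ the class modulo $\mathcal L$ of $\psi\mapsto f(\psi_e)$; this is independent of the choice of $f,e$.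
   Context: A nonstandard analysis is a functor ${}^*:\mathbf{Set}\to\mathbf{Set}$ (images ${}^*A$, ${}^*f$) which (i) maps the full subcategory $\mathbf{Fin}$ of finite sets into itself as a self-equivalence and (ii) preserves finite products and equalizers; thus ${}^*(A_1\times\dots\times A_n)={}^*A_1\times\dots\times{}^*A_n$ and for $R\subseteq A_1\times\dots\times A_n$, ${}^*R\subseteq{}^*A_1\times\dots\times{}^*A_n$. For an infinite cardinal $\mathfrak m$, $x\in{}^*A$ is $\mathfrak m$-confined if $x\in{}^*A'$ for some $A'\subseteq A$ with $|A'|\le\mathfrak m$; the analysis is $\mathfrak m$-confined if all elements of all ${}^*A$ are. For sets $B,E$, the cylinder Boolean algebra of $B^E$ consists of the subsets of $B^E$ of the form $\{\psi\in B^E:(\psi_{e_1},\dots,\psi_{e_n})\in R\}$ with $e_1,\dots,e_n\in E$, $R\subseteq B^n$. A local representation over $B$ is a pair $(E,\mathcal L)$ with $E$ a set and $\mathcal L$ an ultrafilter on the cylinder Boolean algebra of $B^E$; for $e_1,\dots,e_n\in E$ and $R\subseteq B^n$ one says $R$ ${}^*$-holds for $(e_1,\dots,e_n)$ if $\{\psi:(\psi_{e_1},\dots,\psi_{e_n})\in R\}\in\mathcal L$. Two local representations $(E,\mathcal L)$, $(E',\mathcal L')$ over $B$ are isomorphic if there is a bijection $\theta:E\to E'$ such that for all $n$, $e_i\in E$, $R\subseteq B^n$: $R$ ${}^*$-holds for $(e_1,\dots,e_n)$ iff it ${}^*$-holds for $(\theta e_1,\dots,\theta e_n)$. A nonstandard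 analysis induces on a set $B$ the local representation $E={}^*B$ in which $R$ ${}^*$-holds for $(e_1,\dots,e_n)$ iff $(e_1,\dots,e_n)\in{}^*R$. The nonstandard analysis induced by $(E,\mathcal L)$: for a set $X$, ${}^*X$ is the set of maps $\phi:B^E\to X$ depending only on finitely many coordinates, modulo the equivalence $\phi\sim\phi'$ iff $\{\psi:\phi(\psi)=\phi'(\psi)\}\in\mathcal L$; for $g:X\to Y$, ${}^*g([\phi])=[g\circ\phi]$. *)

From mathcomp Require Import all_boot.
From Stdlib Require Import ClassicalEpsilon.
Set Implicit Arguments. Unset Strict Implicit. Unset Printing Implicit Defensive.

(* "Set" is modelled by Type; a subset of A is a predicate A -> Prop and the
   corresponding object is the subtype {a | P a}; B^n is 'I_n -> B. *)

Definition finite (A : Type) : Prop := exists l : seq A, forall a, List.In a l.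

Section NSA.
Variable F : Type -> Type.
Variable fmap : forall X Y : Type, (X -> Y) -> F X -> F Y.

Definition is_functor : Prop :=
  (forall X (x : F X), fmap (fun a : X => a) x = x) /\
  (forall X Y Z (f : X -> Y) (g : Y -> Z) (x : F X),
      fmap (fun a => g (f a)) x = fmap g (fmap f x)).

Definition fin_self_equivalence : Prop :=
  (forall A, finite A -> finite (F A)) /\
  (forall A B (f g : A -> B), finite A -> finite B ->
      (forall y, fmap f y = fmap g y) -> forall a, f a = g a) /\
  (forall A B (h : F A -> F B), finite A -> finite B ->
      exists f : A -> B, forall y, fmap f y = h y) /\
  (forall Y, finite Y -> exists (X : Type) (u : F X -> Y), finite X /\ bijective u).

Definition preserves_finite_products : Prop :=
  (exists u : F unit, forall v : F unit, v = u) /\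
  (forall A B : Type,
      bijective (fun z : F (A * B) => (fmap (@fst A B) z, fmap (@snd A B) z))).

Definition preserves_equalizers : Prop :=
  forall A B (f g : A -> B),
    injective (fmap (@proj1_sig A (fun a => f a = g a))) /\
    (forall y : F A, fmap f y = fmap g y ->
       exists z : F {a | f a = g a}, fmap (@proj1_sig _ _) z = y).

Definition is_NSA : Prop :=
  is_functor /\ fin_self_equivalence /\ preserves_finite_products /\
  preserves_equalizers.

(* m-confined, with m = |B| : every x in *A lies in *A' for some A' with
   |A'| <= |B| *)
Definition confined (B : Type) : Prop :=
  forall A (x : F A), exists (A' : A -> Prop) (j : {a | A' a} -> B),
    injective j /\ exists y : F {a | A' a}, fmap (@proj1_sig _ _) y = x.

(* induced local representation on B: R *-holds for (e_1..e_n) iff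
   (e_1..e_n) in *R  (as a subset of *(B^n) = ( *B)^n ) *)
Definition ind_holds (B : Type) (n : nat) (e : 'I_n -> F B)
    (R : ('I_n -> B) -> Prop) : Prop :=
  exists r : F {v : 'I_n -> B | R v},
    forall i, fmap (fun w : {v : 'I_n -> B | R v} => proj1_sig w i) r = e i.
End NSA.

Section LocalRep.
Variables B E : Type.

Definition cyl (n : nat) (e : 'I_n -> E) (R : ('I_n -> B) -> Prop) :
    (E -> B) -> Prop := fun psi => R (fun i => psi (e i)).

Definition cylinder (S : (E -> B) -> Prop) : Prop :=
  exists n (e : 'I_n -> E) (R : ('I_n -> B) -> Prop),
    forall psi, S psi <-> cyl e R psi.

Definition cyl_ultrafilter (L : ((E -> B) -> Prop) -> Prop) : Prop :=
  (forall S, L S -> cylinder S) /\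
  L (fun _ => True) /\
  ~ L (fun _ => False) /\
  (forall S T, L S -> L T -> L (fun psi => S psi /\ T psi)) /\
  (forall S T, L S -> cylinder T -> (forall psi, S psi -> T psi) -> L T) /\
  (forall S, cylinder S -> L S \/ L (fun psi => ~ S psi)).

Definition lr_iso (L : ((E -> B) -> Prop) -> Prop)
    (F : Type -> Type) (fmap : forall X Y : Type, (X -> Y) -> F X -> F Y)
    (theta : E -> F B) : Prop :=
  bijective theta /\
  forall n (e : 'I_n -> E) (R : ('I_n -> B) -> Prop),
    L (cyl e R) <-> ind_holds fmap (fun i => theta (e i)) R.

Variable L : ((E -> B) -> Prop) -> Prop.

Definition fin_dep (X : Type) (phi : (E -> B) -> X) : Prop :=
  exists n (e : 'I_n -> E) (f : ('I_n -> B) -> X),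
    forall psi, phi psi = f (fun i => psi (e i)).

Definition FD (X : Type) := {phi : (E -> B) -> X | fin_dep phi}.

Definition class_of (X : Type) (phi : FD X) : FD X -> Prop :=
  fun phi' => L (fun psi => proj1_sig phi psi = proj1_sig phi' psi).

Definition Star (X : Type) : Type :=
  {C : FD X -> Prop | exists phi : FD X, C = class_of phi}.

Lemma fin_dep_comp (X Y : Type) (g : X -> Y) (phi : (E -> B) -> X) :
  fin_dep phi -> fin_dep (fun psi => g (phi psi)).
Proof.
move=> [n [e [f H]]]; exists n, e, (fun v => g (f v)) => psi.
by rewrite H.
Qed.

Definition fd_comp (X Y : Type) (g : X -> Y) (phi : FD X) : FD Y :=
  exist _ (fun psi => g (proj1_sig phi psi))
        (fin_dep_comp g (proj2_sig phi)).

Definition star_class (X : Type) (phi : FD X) : Star X :=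
  exist _ (class_of phi) (ex_intro _ phi erefl).

Definition starmap (X Y : Type) (g : X -> Y) (C : Star X) : Star Y :=
  star_class (fd_comp g (proj1_sig (constructive_indefinite_description _
                                       (proj2_sig C)))).

Definition represents (X : Type) (C : Star X) (phi : (E -> B) -> X) : Prop :=
  exists H : fin_dep phi, proj1_sig C = class_of (exist _ phi H).
End LocalRep.

(* Part (i) is Los's theorem for the cylindrical ultrapower: as L is an
   ultrafilter, an element of *A for finite A is L-almost everywhere constant,
   and products and equalizers are computed pointwise modulo L.  An element
   [f (psi e_1, ..., psi e_n)] of *A lies in *A' for A' the image of f, and
   |B^n| = |B| for infinite B by Hessenberg's theorem |B * B| = |B|, proved
   here from Zorn's lemma.

   For part (ii), preservation of finite products identifies °(B^n) with
   (°B)^n, so e : 'I_n -> E gives an element z_e of °(B^n); preservation of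
   equalizers and the isomorphism theta of local representations show that
   °f(z_e) = °g(z_e') exactly when f (psi o e) = g (psi o e') for L-almost all
   psi.  Hence alpha is well defined and injective.  By |B|-confinement every
   element of °X is °f(theta e) for some f : B -> X and e : E, which gives gamma
   and makes alpha surjective. *)

From mathcomp Require Import all_boot.
From mathcomp Require Import boolp classical_sets.
Set Implicit Arguments. Unset Strict Implicit. Unset Printing Implicit Defensive.

Local Open Scope classical_set_scope.

(** * Hessenberg's theorem *)

Lemma bigcup_chain2 T (F : set (set T)) s t : total_on F subset ->
  (\bigcup_(X in F) X) s -> (\bigcup_(X in F) X) t ->
  exists2 X, F X & X s /\ X t.
Proof.
move=> Ftot [X FX Xs] [Y FY Yt].
have [XY|YX] := Ftot X Y FX FY; first by exists Y => //; split => //; apply: XY.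
by exists X => //; split => //; apply: YX.
Qed.

Definition functional_graph {T U : Type} (R : set (T * U)) :=
  forall x y y', R (x, y) -> R (x, y') -> y = y'.

Definition injective_graph {T U : Type} (R : set (T * U)) :=
  forall x x' y, R (x, y) -> R (x', y) -> x = x'.

Definition inj_graph_on T U (S : set T) (C : set U) (R : set (T * U)) :=
  [/\ functional_graph R, injective_graph R,
       forall x y, R (x, y) -> S x /\ C y & forall x, S x -> exists y, R (x, y)].

Definition graph_comp T U V (R : set (T * U)) (R' : set (U * V)) : set (T * V) :=
  fun p => exists y, R (p.1, y) /\ R' (y, p.2).

Definition graph_transpose T U (R : set (T * U)) : set (U * T) := fun p => R (p.2, p.1).

Definition graph_prod T1 T2 U1 U2 (R1 : set (T1 * U1)) (R2 : set (T2 * U2)) :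
  set ((T1 * T2) * (U1 * U2)) := fun p => R1 (p.1.1, p.2.1) /\ R2 (p.1.2, p.2.2).

Lemma functional_bigcup T U (F : set (set (T * U))) :
  F `<=` functional_graph -> total_on F subset ->
  functional_graph (\bigcup_(X in F) X).
Proof.
move=> Ffun Ftot x y y' Gy Gy'.
have [X FX [Xy Xy']] := bigcup_chain2 Ftot Gy Gy'; exact: Ffun X FX _ _ _ Xy Xy'.
Qed.

Lemma injective_bigcup T U (F : set (set (T * U))) :
  F `<=` injective_graph -> total_on F subset ->
  injective_graph (\bigcup_(X in F) X).
Proof.
move=> Finj Ftot x x' y Gx Gx'.
have [X FX [Xx Xx']] := bigcup_chain2 Ftot Gx Gx'; exact: Finj X FX _ _ _ Xx Xx'.
Qed.

Lemma inj_graph_on_comp T U V (S : set T) (C : set U) (D : set V)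
    (R : set (T * U)) (R' : set (U * V)) :
  inj_graph_on S C R -> inj_graph_on C D R' -> inj_graph_on S D (graph_comp R R').
Proof.
move=> [Rfun Rinj RSC Rtot] [R'fun R'inj R'CD R'tot]; split.
- move=> x z z' [y [Ry R'z]] [y' [Ry' R'z']].
  by rewrite (Rfun _ _ _ Ry Ry') in R'z; exact: R'fun R'z R'z'.
- move=> x x' z [y [Ry R'z]] [y' [Ry' R'z']].
  by rewrite (R'inj _ _ _ R'z R'z') in Ry; exact: Rinj Ry Ry'.
- by move=> x z [y [/RSC[Sx _] /R'CD[_ Dz]]].
- move=> x /Rtot[y Ry]; have [_ /R'tot[z R'z]] := RSC _ _ Ry.
  by exists z, y.
Qed.

Lemma inj_graph_on_prod T1 T2 U1 U2 (S1 : set T1) (S2 : set T2) (C1 : set U1)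
    (C2 : set U2) (R1 : set (T1 * U1)) (R2 : set (T2 * U2)) :
  inj_graph_on S1 C1 R1 -> inj_graph_on S2 C2 R2 ->
  inj_graph_on (S1 `*` S2) (C1 `*` C2) (graph_prod R1 R2).
Proof.
move=> [R1fun R1inj R1SC R1tot] [R2fun R2inj R2SC R2tot]; split.
- move=> [x1 x2] [y1 y2] [y1' y2'] [/= R1y R2y] [/= R1y' R2y'].
  by rewrite (R1fun _ _ _ R1y R1y') (R2fun _ _ _ R2y R2y').
- move=> [x1 x2] [x1' x2'] [y1 y2] [/= R1x R2x] [/= R1x' R2x'].
  by rewrite (R1inj _ _ _ R1x R1x') (R2inj _ _ _ R2x R2x').
- move=> [x1 x2] [y1 y2] [/= /R1SC[S1x C1y] /R2SC[S2x C2y]]; by split; split.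
- move=> [x1 x2] [/= /R1tot[y1 R1y] /R2tot[y2 R2y]]; by exists (y1, y2).
Qed.

Lemma inj_graph_on_transpose T U (S : set T) (C : set U) (R : set (T * U)) :
  inj_graph_on S C R ->
  inj_graph_on [set y | exists x, R (x, y)] S (graph_transpose R).
Proof.
move=> [Rfun Rinj RSC _]; split.
- by move=> y x x'; exact: Rinj.
- by move=> y y' x; exact: Rfun.
- by move=> y x Rxy; split; [exists x | case: (RSC _ _ Rxy)].
- by move=> y [x Rxy]; exists x.
Qed.

Lemma inj_graph_on_restrict T U (S S' : set T) (C : set U) (R : set (T * U)) :
  S' `<=` S -> inj_graph_on S C R ->
  inj_graph_on S' C (fun p => S' p.1 /\ R p).
Proof.
move=> S'S [Rfun Rinj RSC Rtot]; split.
- by move=> x y y' [_ Ry] [_ Ry']; exact: Rfun Ry Ry'.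
- by move=> x x' y [_ Rx] [_ Rx']; exact: Rinj Rx Rx'.
- by move=> x y [S'x /RSC[]].
- by move=> x S'x; have [y Ry] := Rtot x (S'S x S'x); exists y.
Qed.

Lemma inj_graph_on_setU T U (S S' : set T) (C C' : set U)
    (R R' : set (T * U)) :
  (forall x, S x -> ~ S' x) -> (forall y, C y -> ~ C' y) ->
  inj_graph_on S C R -> inj_graph_on S' C' R' ->
  inj_graph_on (S `|` S') (C `|` C') (R `|` R').
Proof.
move=> SS' CC' [Rfun Rinj RSC Rtot] [R'fun R'inj R'SC R'tot]; split.
- move=> x y y' [Ry|R'y] [Ry'|R'y'];
    first exact: Rfun Ry Ry'; last exact: R'fun R'y R'y'.
  + by case: (SS' x); [case: (RSC _ _ Ry) | case: (R'SC _ _ R'y')].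
  + by case: (SS' x); [case: (RSC _ _ Ry') | case: (R'SC _ _ R'y)].
- move=> x x' y [Rx|R'x] [Rx'|R'x'];
    first exact: Rinj Rx Rx'; last exact: R'inj R'x R'x'.
  + by case: (CC' y); [case: (RSC _ _ Rx) | case: (R'SC _ _ R'x')].
  + by case: (CC' y); [case: (RSC _ _ Rx') | case: (R'SC _ _ R'x)].
- move=> x y [/RSC[Sx Cy]|/R'SC[S'x C'y]]; split; by [left|right].
- move=> x [/Rtot[y Ry]|/R'tot[y R'y]]; exists y; by [left|right].
Qed.

Lemma graph_inj T U (R : set (T * U)) :
  (forall x, exists y, R (x, y)) -> injective_graph R -> exists g : T -> U, injective g.
Proof.
move=> Rtot Rinj; pose g x := sval (cid (Rtot x)).
have gP x : R (x, g x) := svalP (cid (Rtot x)).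
by exists g => x x' gxx'; apply: (Rinj _ _ (g x)); rewrite // gxx'.
Qed.

Lemma inj_graph_comparable T U (S : set T) (C : set U) :
  (exists R : set (T * U), inj_graph_on S C R) \/
  (exists R' : set (U * T), inj_graph_on C S R').
Proof.
pose Q (R : set (T * U)) := [/\ functional_graph R, injective_graph R &
  forall x y, R (x, y) -> S x /\ C y].
have [R [[Rfun Rinj RSC] Rmax]] : exists R, Q R /\ forall R', R `<` R' -> ~ Q R'.
  apply: Zorn_bigcup => F FQ Ftot; split.
  - by apply: functional_bigcup Ftot => X /FQ[].
  - by apply: injective_bigcup Ftot => X /FQ[].
  - by move=> x y [X /FQ[_ _ XSC] /XSC].
have [Rtot|] := EM (forall x, S x -> exists y, R (x, y)); first by left; exists R.
move=> /existsNP[a /not_implyP[Sa /forallNP Ra]].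
have [R'tot|] := EM (forall y, C y -> exists x, R (x, y)).
  right; exists (graph_transpose R); split => [y x x'|y y' x|y x /RSC[]|] //.
  - exact: Rinj.
  - exact: Rfun.
move=> /existsNP[c /not_implyP[Cc /forallNP Rc]].
exfalso; apply: (Rmax (R `|` [set (a, c)])); first split.
- by move=> p Rp; left.
- by move=> /(_ (a, c) (or_intror erefl)) /Ra.
split.
- move=> x y y' [Ry|[Ex Ey]] [Ry'|[Ex' Ey']]; rewrite ?Ey ?Ey' //.
  + exact: Rfun Ry Ry'.
  + by case: (Ra y); rewrite -Ex'.
  + by case: (Ra y'); rewrite -Ex.
- move=> x x' y [Rx|[Ex Ey]] [Rx'|[Ex' Ey']]; rewrite ?Ex ?Ex' //.
  + exact: Rinj Rx Rx'.
  + by case: (Rc x); rewrite -Ey'.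
  + by case: (Rc x'); rewrite -Ey.
- by move=> x y [/RSC|[-> ->]].
Qed.

Lemma infinite_nat_inj (B : Type) : ~ finite B -> exists f : nat -> B, injective f.
Proof.
move=> Binf.
have fresh (l : seq B) : exists b, ~ List.In b l.
  apply: contrapT => /forallNP lB; apply: Binf; exists l => b; exact: contrapT.
pose g l := sval (cid (fresh l)).
have gP l : ~ List.In (g l) l := svalP (cid (fresh l)).
pose s := fix s n := if n is n'.+1 then g (s n') :: s n' else [::].
have in_s m n : m < n -> List.In (g (s m)) (s n).
  elim: n => // n IH; rewrite ltnS leq_eqVlt => /orP[/eqP ->|/IH]; by [left|right].
exists (g \o s) => m n /= gmn; case: (ltngtP m n) => // [mn|nm].
  by case: (gP (s n)); rewrite -gmn; apply: in_s.
by case: (gP (s m)); rewrite gmn; apply: in_s.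
Qed.

Section Hessenberg.
Variable B : Type.

(* A pairing graph is the graph of an injection A * A -> A, whose carrier A is
   read off the diagonal. *)
Definition gdom (G : set ((B * B) * B)) : set B := fun a => exists y, G ((a, a), y).

Definition pairing_graph (G : set ((B * B) * B)) :=
  inj_graph_on (gdom G `*` gdom G) (gdom G) G.

Lemma gdom_inj_graph_on (A : set B) (C : set B) G :
  inj_graph_on (A `*` A) C G -> gdom G = A.
Proof.
move=> [_ _ GAC Gtot]; apply/predeqP => a; split; first by move=> [y /GAC[[]]].
by move=> Aa; have [y Gy] := Gtot (a, a) (conj Aa Aa); exists y.
Qed.

Lemma pairing_bigcup (F : set (set ((B * B) * B))) :
  F `<=` pairing_graph -> total_on F subset -> pairing_graph (\bigcup_(X in F) X).
Proof.
move=> Fpair Ftot.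
have domF X : F X -> gdom X `<=` gdom (\bigcup_(X in F) X).
  by move=> FX a [y Xy]; exists y, X.
split.
- by apply: functional_bigcup Ftot => X /Fpair[].
- by apply: injective_bigcup Ftot => X /Fpair[].
- move=> p y [X FX Xpy]; have [_ _ XAC _] := Fpair X FX.
  by have [[Xa Xb] Xy] := XAC _ _ Xpy; split; [split|]; apply: (domF X FX).
- move=> [a b] [[ya Ua] [yb Ub]].
  have [Z FZ [Za Zb]] := bigcup_chain2 Ftot Ua Ub; have [_ _ _ Ztot] := Fpair Z FZ.
  have [y Zy] := Ztot (a, b) (conj (ex_intro _ ya Za) (ex_intro _ yb Zb)).
  by exists y, Z.
Qed.

Section Coding.
Variable G : set ((B * B) * B).
Hypothesis Gpair : pairing_graph G.
Local Notation A := (gdom G).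
Variables (t0 t1 : B) (D : set B) (J : set (B * B)).
Hypotheses (At0 : A t0) (At1 : A t1) (t01 : t0 <> t1).
Hypotheses (AD : forall x, A x -> ~ D x) (Jinj : inj_graph_on D A J).

Definition tagging : set (B * (B * B)) := fun p =>
  (A p.1 /\ p.2 = (t0, p.1)) \/ (D p.1 /\ p.2.1 = t1 /\ J (p.1, p.2.2)).

Lemma tagging_inj : inj_graph_on (A `|` D) (A `*` A) tagging.
Proof.
have [Jfun Jinj' JDA Jtot] := Jinj; split.
- move=> x [u a] [v b]; rewrite /tagging /=.
  move=> -[[Ax [-> ->]]|[Dx [-> Ja]]] [[Ax' [-> ->]]|[Dx' [-> Jb]]] //.
  + by case: (AD Ax Dx').
  + by case: (AD Ax' Dx).
  + by rewrite (Jfun _ _ _ Ja Jb).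
- move=> x x' [u a]; rewrite /tagging /= => -[[Ax [Eu Ea]]|[Dx [Eu Ja]]]
    [[Ax' [Eu' Ea']]|[Dx' [Eu' Ja']]]; first by rewrite -Ea -Ea'.
  + by case: t01; rewrite -Eu -Eu'.
  + by case: t01; rewrite -Eu -Eu'.
  + exact: Jinj' Ja Ja'.
- move=> x [u a]; rewrite /tagging /= => -[[Ax [-> ->]]|[Dx [-> /JDA[_ Aa]]]].
  + by split; [left|split].
  + by split; [right|split].
- move=> x [Ax|Dx]; first by exists (t0, x); left.
  by have [a Ja] := Jtot x Dx; exists (t1, a); right.
Qed.

Definition tag_code : set (B * B) := graph_comp tagging G.

Definition square_code : set ((B * B) * B) :=
  graph_comp (graph_prod tag_code tag_code) G.

Lemma square_code_inj : inj_graph_on ((A `|` D) `*` (A `|` D)) A square_code.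
Proof.
have code_inj : inj_graph_on (A `|` D) A tag_code.
  exact: inj_graph_on_comp tagging_inj Gpair.
exact: inj_graph_on_comp (inj_graph_on_prod code_inj code_inj) Gpair.
Qed.

End Coding.

Lemma pairing_graph_extend G t0 t1 : pairing_graph G ->
  gdom G t0 -> gdom G t1 -> t0 <> t1 ->
  (exists H, inj_graph_on (gdom G) (~` gdom G) H) ->
  exists2 G', G `<` G' & pairing_graph G'.
Proof.
move=> Gpair At0 At1 t01 [H [Hfun Hinj HAC Htot]].
set A := gdom G; set D := [set y | exists x, H (x, y)]; set S := A `|` D.
have AD x : A x -> ~ D x by move=> Ax [a /HAC[_]].
have HAD : inj_graph_on A D H.
  by split => // x y Hxy; split; [case: (HAC _ _ Hxy)|exists x].
have HDA := inj_graph_on_transpose HAD.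
pose N p := (S `*` S `\` A `*` A) p.1 /\
  graph_comp (square_code G t0 t1 D (graph_transpose H)) H p.
have Ninj : inj_graph_on (S `*` S `\` A `*` A) D N.
  apply: (@inj_graph_on_restrict _ _ (S `*` S)); first by move=> p [].
  exact: inj_graph_on_comp (square_code_inj Gpair At0 At1 t01 AD HDA) HAD.
have G'inj : inj_graph_on (A `*` A `|` (S `*` S `\` A `*` A)) (A `|` D) (G `|` N).
  by apply: inj_graph_on_setU Gpair Ninj => [p AAp [] |].
rewrite setDUK in G'inj; last by apply: setSX; apply: subsetUl.
have domG' : gdom (G `|` N) = S := gdom_inj_graph_on G'inj.
exists (G `|` N); last by rewrite /pairing_graph domG'.
split; first exact: subsetUl.
move=> G'G; have [d Hd] := Htot t0 At0.
have Sd : S d by right; exists t0.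
rewrite -domG' in Sd; have [y G'd] := Sd.
by apply: (AD d); [exists y; apply: G'G | exists t0].
Qed.

Lemma pairing_graph_square_inj G t0 t1 : pairing_graph G ->
  gdom G t0 -> gdom G t1 -> t0 <> t1 ->
  (exists H, inj_graph_on (~` gdom G) (gdom G) H) ->
  exists g : B * B -> B, injective g.
Proof.
move=> Gpair At0 At1 t01 [H Hinj].
have [_ Qinj _ Qtot] :=
  square_code_inj Gpair At0 At1 t01 (fun x Ax nAx => nAx Ax) Hinj.
by apply: (graph_inj _ Qinj) => p; apply: Qtot; split; apply: EM.
Qed.

Definition nat_seed (f : nat -> B) : set ((B * B) * B) := fun p =>
  exists m n, [/\ p.1.1 = f m, p.1.2 = f n & p.2 = f (pickle (m, n))].

Lemma nat_seed_pairing (f : nat -> B) : injective f -> pairing_graph (nat_seed f).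
Proof.
move=> finj.
suff seed_inj : inj_graph_on (range f `*` range f) (range f) (nat_seed f).
  by rewrite /pairing_graph (gdom_inj_graph_on seed_inj).
split.
- move=> [x1 x2] y y' [m [n [/= -> -> ->]]] [m' [n' [/= E1 E2 ->]]].
  by rewrite (finj _ _ E1) (finj _ _ E2).
- move=> [x1 x2] [x1' x2'] y [m [n [/= -> -> ->]]] [m' [n' [/= -> ->]]].
  by move=> /finj /(pcan_inj pickleK) [-> ->].
- move=> [x1 x2] y [m [n [/= -> -> ->]]]; by split; [split|]; eexists.
- move=> [x1 x2] [/= [m _ <-] [n _ <-]]; by exists (f (pickle (m, n))), m, n.
Qed.

Lemma pairing_graph_maximal (seed : set ((B * B) * B)) :
  pairing_graph seed -> seed !=set0 ->
  exists G, [/\ pairing_graph G, seed `<=` G & forall G', G `<` G' -> ~ pairing_graph G'].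
Proof.
move=> seed_pair [t0 seed_t0].
pose P G := pairing_graph G /\ (G = set0 \/ seed `<=` G).
have [G [[Gpair Gseed] Gmax]] : exists G, P G /\ forall G', G `<` G' -> ~ P G'.
  apply: Zorn_bigcup => F FP Ftot; split; first by apply: pairing_bigcup Ftot => X /FP[].
  have [[X FX seedX]|noseed] := EM (exists2 X, F X & seed `<=` X).
    by right; apply: subset_trans seedX _; apply: bigcup_sup.
  left; apply/predeqP => t; split => // -[X FX Xt].
  by case: (FP X FX) => _ [X0|seedX]; [rewrite X0 in Xt|case: noseed; exists X].
have seedG : seed `<=` G.
  case: Gseed => // G0; exfalso; apply: (Gmax seed); last by split => //; right.
  by rewrite G0; split => // /(_ t0 seed_t0).
exists G; split => // G' GG' G'pair; apply: (Gmax G' GG'); split => //.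
by right; apply: subset_trans seedG (properW GG').
Qed.

End Hessenberg.

(* Take a maximal pairing graph G, with carrier A, that
   contains a countable seed.  If ~` A injects into A, then B = A `|` ~` A and
   hence B * B inject into A.  Otherwise some H injects A into ~` A, and G
   extends to a pairing graph on A `|` H(A), against maximality. *)
Theorem infinite_square_inj (B : Type) : ~ finite B ->
  exists g : B * B -> B, injective g.
Proof.
move=> Binf; have [f finj] := infinite_nat_inj Binf.
have seed0 : nat_seed f ((f 0, f 0), f (pickle (0, 0))) by exists 0, 0.
have [G [Gpair seedG Gmax]] :=
  pairing_graph_maximal (nat_seed_pairing finj) (ex_intro _ _ seed0).
have At k : gdom G (f k) by exists (f (pickle (k, k))); apply: seedG; exists k, k.
have f01 : f 0 <> f 1 by move/finj.
case: (inj_graph_comparable (gdom G) (~` gdom G)) => Hcmp.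
- have [G' GG' G'pair] := pairing_graph_extend Gpair (At 0) (At 1) f01 Hcmp.
  by case: (Gmax G' GG').
- exact: pairing_graph_square_inj Gpair (At 0) (At 1) f01 Hcmp.
Qed.

Lemma infinite_tuple_inj (B : Type) : ~ finite B ->
  forall n, exists g : ('I_n -> B) -> B, injective g.
Proof.
move=> Binf; have [f _] := infinite_nat_inj Binf.
have [h hinj] := infinite_square_inj Binf.
elim=> [|n [g ginj]].
  by exists (fun _ => f 0) => v v' _; apply: funext => -[].
exists (fun v => h (v ord0, g (fun i => v (lift ord0 i)))) => v v' /hinj[E0 /ginj E].
apply: funext => i; case: (unliftP ord0 i) => [j ->|->] //.
exact: (congr1 (fun w => w j) E).
Qed.

(** * The cylindrical ultrapower *)

Lemma sval_inj A (P : A -> Prop) : injective (@sval A P).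
Proof. by move=> u v; apply: eq_sig_hprop => *; apply: Prop_irrelevance. Qed.

Definition concat_index T n m (e1 : 'I_n -> T) (e2 : 'I_m -> T) : 'I_(n + m) -> T :=
  fun i => match split i with inl j => e1 j | inr k => e2 k end.

Lemma concat_index_lshift T n m (e1 : 'I_n -> T) (e2 : 'I_m -> T) i :
  concat_index e1 e2 (lshift m i) = e1 i.
Proof. by rewrite /concat_index (unsplitK (inl i : 'I_n + 'I_m)). Qed.

Lemma concat_index_rshift T n m (e1 : 'I_n -> T) (e2 : 'I_m -> T) i :
  concat_index e1 e2 (rshift n i) = e2 i.
Proof. by rewrite /concat_index (unsplitK (inr i : 'I_n + 'I_m)). Qed.

Section CylindricalUltrapower.
Variables (B E : Type) (L : ((E -> B) -> Prop) -> Prop).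
Hypothesis HL : cyl_ultrafilter L.

Lemma fin_dep_const X (x : X) : fin_dep (fun _ : E -> B => x).
Proof. by exists 0, (fun i : 'I_0 => False_rect E (notF (ltn_ord i))), (fun _ => x). Qed.

Lemma fin_dep_tuple X n (e : 'I_n -> E) (f : ('I_n -> B) -> X) :
  fin_dep (fun psi : E -> B => f (fun i => psi (e i))).
Proof. by exists n, e, f. Qed.

Lemma fin_dep_pair X Y (a : (E -> B) -> X) (b : (E -> B) -> Y) :
  fin_dep a -> fin_dep b -> fin_dep (fun psi => (a psi, b psi)).
Proof.
move=> [n [e [f Ha]]] [m [e' [g Hb]]].
exists (n + m), (concat_index e e'),
  (fun v => (f (fun i => v (lshift m i)), g (fun j => v (rshift n j)))) => psi.
rewrite Ha Hb; congr (f _, g _); apply: funext => i;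
  by rewrite ?concat_index_lshift ?concat_index_rshift.
Qed.

Lemma cylinder_fin_dep X (a : (E -> B) -> X) (P : X -> Prop) :
  fin_dep a -> cylinder (fun psi => P (a psi)).
Proof.
by move=> [n [e [f Ha]]]; exists n, e, (fun v => P (f v)) => psi; rewrite /cyl Ha.
Qed.

Lemma L_sub (S T : (E -> B) -> Prop) :
  L S -> (forall psi, S psi -> T psi) -> cylinder T -> L T.
Proof. by move=> LS ST CT; case: HL => _ [_ [_ [_ [Lup _]]]]; apply: Lup LS CT ST. Qed.

Lemma L_and (S T : (E -> B) -> Prop) : L S -> L T -> L (fun psi => S psi /\ T psi).
Proof. by case: HL => _ [_ [_ [LI _]]]; apply: LI. Qed.

Lemma L_ex (S : (E -> B) -> Prop) : L S -> exists psi, S psi.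
Proof.
move=> LS; apply: contrapT => /forallNP noS; case: HL => _ [_ [L0 _]]; apply: L0.
by apply: L_sub LS _ _ => //; exact: (cylinder_fin_dep id (fin_dep_const False)).
Qed.

Lemma L_or_not (S : (E -> B) -> Prop) : cylinder S -> L S \/ L (fun psi => ~ S psi).
Proof. by case: HL => _ [_ [_ [_ [_ LU]]]]; apply: LU. Qed.

Lemma L_rel X Y (a : (E -> B) -> X) (b : (E -> B) -> Y) (R : X -> Y -> Prop)
    (S : (E -> B) -> Prop) : fin_dep a -> fin_dep b -> L S ->
  (forall psi, S psi -> R (a psi) (b psi)) -> L (fun psi => R (a psi) (b psi)).
Proof.
move=> Ha Hb LS SR; apply: L_sub LS SR _.
exact: (cylinder_fin_dep (fun p => R p.1 p.2) (fin_dep_pair Ha Hb)).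
Qed.

Lemma L_rel_all X Y (a : (E -> B) -> X) (b : (E -> B) -> Y) (R : X -> Y -> Prop) :
  fin_dep a -> fin_dep b -> (forall psi, R (a psi) (b psi)) ->
  L (fun psi => R (a psi) (b psi)).
Proof.
case: HL => _ [LT _] Ha Hb aRb; exact: L_rel Ha Hb LT (fun psi _ => aRb psi).
Qed.

Local Notation eqL a b := (L (fun psi => sval a psi = sval b psi)).

Lemma class_ofP X (a b : FD B E X) : class_of L a = class_of L b <-> eqL a b.
Proof.
split => [ab|Lab].
  have bb : class_of L b b by apply: L_rel_all (svalP b) (svalP b) _.
  by rewrite -ab in bb.
apply/funext => c; apply/propext; split => Lc.
- apply: L_rel (svalP b) (svalP c) (L_and Lab Lc) _; by move=> psi [<-].
- apply: L_rel (svalP a) (svalP c) (L_and Lab Lc) _; by move=> psi [->].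
Qed.

Lemma star_classP X (a b : FD B E X) : star_class L a = star_class L b <-> eqL a b.
Proof.
rewrite -class_ofP; split => [/(congr1 sval)//|ab].
exact: eq_exist.
Qed.

Lemma star_class_ext X (a b : FD B E X) :
  (forall psi, sval a psi = sval b psi) -> star_class L a = star_class L b.
Proof. by move=> ab; apply/star_classP; apply: L_rel_all (svalP a) (svalP b) ab. Qed.

Lemma star_class_surj X (C : Star L X) : exists a, C = star_class L a.
Proof. by case: C => c [a ca]; exists a; apply: eq_exist. Qed.

Definition star_rep X (C : Star L X) : FD B E X := sval (cid (star_class_surj C)).

Lemma star_repK X (C : Star L X) : star_class L (star_rep C) = C.
Proof. by rewrite /star_rep; case: cid. Qed.

Lemma represents_class X (C : Star L X) phi :
  represents C phi <-> exists H : fin_dep phi, C = star_class L (exist _ phi H).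
Proof.
split=> [[H CH]|[H ->]]; last by exists H.
by exists H; case: C CH => c Cc /= cH; apply: eq_exist.
Qed.

Lemma starmap_class X Y (g : X -> Y) (a : FD B E X) :
  starmap g (star_class L a) = star_class L (fd_comp g a).
Proof.
rewrite /starmap.
case: (ClassicalEpsilon.constructive_indefinite_description _ _) => r /= /class_ofP ar.
apply/star_classP => /=.
apply: (L_rel (R := eq) (fin_dep_comp g (svalP r)) (fin_dep_comp g (svalP a)) ar).
by move=> psi ->.
Qed.

Lemma represents_star_class X (a : FD B E X) : represents (star_class L a) (sval a).
Proof. by case: a => phi H; exists H. Qed.

Lemma represents_eqL X (C : Star L X) phi phi' :
  represents C phi -> represents C phi' -> L (fun psi => phi psi = phi' psi).
Proof.
by move=> /represents_class[H ->] /represents_class[H'] /star_classP.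
Qed.

Lemma represents_inj X (C C' : Star L X) phi :
  represents C phi -> represents C' phi -> C = C'.
Proof.
move=> /represents_class[H ->] /represents_class[H' ->].
by congr star_class; apply: sval_inj.
Qed.

Lemma represents_transfer X (C : Star L X) phi phi' : represents C phi ->
  fin_dep phi' -> L (fun psi => phi psi = phi' psi) -> represents C phi'.
Proof.
move=> /represents_class[H ->] H' phiphi'; apply/represents_class; exists H'.
exact/star_classP.
Qed.

Lemma represents_starmap X Y (g : X -> Y) (C : Star L X) phi :
  represents C phi -> represents (starmap g C) (fun psi => g (phi psi)).
Proof.
move=> /represents_class[H ->]; rewrite starmap_class.
exact: represents_star_class (fd_comp g (exist _ phi H)).
Qed.

End CylindricalUltrapower.

Section UltrapowerIsNSA.
Variables (B E : Type) (L : ((E -> B) -> Prop) -> Prop).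
Hypothesis HL : cyl_ultrafilter L.

Definition star_std X (x : X) : Star L X :=
  star_class L (exist _ _ (fin_dep_const B E x)).

Lemma starmap_std X Y (g : X -> Y) (x : X) : starmap g (star_std x) = star_std (g x).
Proof. by rewrite (starmap_class HL); apply: (star_class_ext HL). Qed.

Lemma star_std_inj X : injective (@star_std X).
Proof. by move=> x y /(star_classP HL) /(L_ex HL)[]. Qed.

Lemma L_In_const A (a : FD B E A) (l : seq A) :
  L (fun psi => List.In (sval a psi) l) -> exists x, L (fun psi => sval a psi = x).
Proof.
elim: l => [/(L_ex HL)[]//|x l IHl /= Lxl].
have [|Lnx] := L_or_not HL (cylinder_fin_dep (fun y => y = x) (svalP a)); first by exists x.
apply: IHl; apply: (L_rel (R := fun y _ => List.In y l) HL (svalP a) (svalP a)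
  (L_and HL Lxl Lnx)).
by move=> psi [[<-|]].
Qed.

Lemma star_std_finite A : finite A -> forall C : Star L A, exists x, C = star_std x.
Proof.
move=> [l Al] C; have [a ->] := star_class_surj C.
have [|x ax] := @L_In_const A a l.
  exact: (L_rel_all (R := fun y _ => List.In y l) HL (svalP a) (svalP a)).
by exists x; apply/(star_classP HL).
Qed.

Lemma starmap_functor : is_functor (@starmap B E L).
Proof.
split=> [X|X Y Z f g] C; have [a ->] := star_class_surj C;
  by rewrite !(starmap_class HL); apply: (star_class_ext HL).
Qed.

Lemma starmap_fin_self_equivalence : fin_self_equivalence (@starmap B E L).
Proof.
split; [|split; [|split]].
- move=> A [l Al]; exists (List.map (@star_std A) l) => C.
  by have [x ->] := star_std_finite (ex_intro _ l Al) C; apply: List.in_map.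
- move=> A Y f g _ _ fg a; apply: star_std_inj.
  by rewrite -!starmap_std fg.
- move=> A Y h FA FY.
  have [k kP] := boolp.choice (fun a => star_std_finite FY (h (star_std a))).
  exists k => C; have [a ->] := star_std_finite FA C.
  by rewrite starmap_std kP.
- move=> Y FY; have [u uP] := boolp.choice (star_std_finite FY).
  exists Y, u; split => //; exists (@star_std Y) => [C|y]; first by rewrite -uP.
  by apply: star_std_inj; rewrite -uP.
Qed.

Lemma starmap_finite_products : preserves_finite_products (@starmap B E L).
Proof.
split.
  exists (star_std tt) => C; have [a ->] := star_class_surj C.
  by apply: (star_class_ext HL) => psi; case: (sval a psi).
move=> X Y; pose pairing (p : Star L X * Star L Y) := star_class L
  (exist _ _ (fin_dep_pair (svalP (star_rep p.1)) (svalP (star_rep p.2)))).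
exists pairing => [C|[C1 C2]] /=.
- have [c ->] := star_class_surj C; rewrite !(starmap_class HL); apply/(star_classP HL).
  have /(star_classP HL) r1 := star_repK (star_class L (fd_comp fst c)).
  have /(star_classP HL) r2 := star_repK (star_class L (fd_comp snd c)).
  apply: (L_rel (R := eq) HL _ (svalP c) (L_and HL r1 r2)) => [|psi /= [-> ->]].
    exact: fin_dep_pair (svalP _) (svalP _).
  by case: (sval c psi).
- rewrite !(starmap_class HL).
  by congr (_, _); rewrite -[RHS]star_repK; apply: (star_class_ext HL).
Qed.

Lemma starmap_equalizers : preserves_equalizers (@starmap B E L).
Proof.
move=> A Y f g; split.
  move=> C1 C2; have [c1 ->] := star_class_surj C1; have [c2 ->] := star_class_surj C2.
  rewrite !(starmap_class HL) => /(star_classP HL) c12; apply/(star_classP HL).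
  apply: (L_rel (R := eq) HL (svalP c1) (svalP c2) c12) => psi /=.
  exact: sval_inj.
move=> C; have [c ->] := star_class_surj C.
rewrite !(starmap_class HL) => /(star_classP HL) fcgc.
have [psi0 fg0] := L_ex HL fcgc.
have [n [e [c0 c0E]]] := svalP c.
pose h v : {a | f a = g a} := if pselect (f (c0 v) = g (c0 v)) is left p
  then exist _ (c0 v) p else exist _ _ fg0.
have hP v : f (c0 v) = g (c0 v) -> sval (h v) = c0 v.
  by rewrite /h; case: pselect.
have h_fd : fin_dep (fun psi => h (fun i => psi (e i))) by exists n, e, h.
exists (star_class L (exist _ _ h_fd)); rewrite (starmap_class HL); apply/(star_classP HL).
apply: (L_rel (R := eq) HL (fin_dep_comp _ h_fd) (svalP c) fcgc) => psi /=.
by rewrite c0E => /hP.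
Qed.

Lemma starmap_NSA : is_NSA (@starmap B E L).
Proof.
split; [exact: starmap_functor|split; [exact: starmap_fin_self_equivalence|]].
by split; [exact: starmap_finite_products|exact: starmap_equalizers].
Qed.

Lemma starmap_confined : ~ finite B -> confined (@starmap B E L) B.
Proof.
move=> Binf A C; have [c ->] := star_class_surj C.
have [n [e [f cE]]] := svalP c; have [g ginj] := infinite_tuple_inj Binf n.
pose A' a := exists v, f v = a.
pose j (w : {a | A' a}) := g (sval (cid (svalP w))).
exists A', j; split.
  move=> w w' /ginj ww'; apply: sval_inj.
  by rewrite -(svalP (cid (svalP w))) -(svalP (cid (svalP w'))) ww'.
have c'_fd : fin_dep (fun psi => exist A' (f (fun i => psi (e i))) (ex_intro _ _ erefl)).
  by exists n, e, (fun v => exist A' (f v) (ex_intro _ _ erefl)).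
exists (star_class L (exist _ _ c'_fd)); rewrite (starmap_class HL).
by apply: (star_class_ext HL) => psi /=; rewrite cE.
Qed.

End UltrapowerIsNSA.

(** * Comparison with a confined nonstandard analysis *)

Section NSAFacts.
Variables (F : Type -> Type) (fmap : forall X Y : Type, (X -> Y) -> F X -> F Y).
Hypothesis HN : is_NSA fmap.

Lemma fmap_id X (x : F X) : fmap (fun a => a) x = x.
Proof. by case: HN => -[fid _] _; apply: fid. Qed.

Lemma fmap_comp X Y Z (f : X -> Y) (g : Y -> Z) (x : F X) :
  fmap g (fmap f x) = fmap (fun a => g (f a)) x.
Proof. by case: HN => -[_ fcomp] _; rewrite (fcomp _ _ _ f g). Qed.

Lemma fmap_ext X Y (f g : X -> Y) (x : F X) : f =1 g -> fmap f x = fmap g x.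
Proof. by move=> /funext ->. Qed.

Lemma nsa_terminal : exists u : F unit, forall v, v = u.
Proof. by case: HN => _ [_ [[]]]. Qed.

Lemma nsa_pair_bij X Y :
  bijective (fun z : F (X * Y) => (fmap (@fst X Y) z, fmap (@snd X Y) z)).
Proof. by case: HN => _ [_ [[_ ]]]. Qed.

Lemma nsa_empty T : (T -> False) -> F T -> False.
Proof.
move=> T0 w; have [u uP] := nsa_terminal.
case: HN => _ [[_ [faithful _]] _].
have fin_unit : finite unit by exists [:: tt] => -[]; left.
have fin_bool : finite bool by exists [:: true; false] => -[]; [left|right; left].
suff: true = false by [].
apply: (faithful _ _ (fun _ => true) (fun _ => false) fin_unit fin_bool _ tt) => y.
rewrite (uP y) -(uP (fmap (fun _ => tt) w)) !fmap_comp.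
by apply: fmap_ext => a; case: (T0 a).
Qed.

Lemma fmap_eval_inj Y n (z z' : F ('I_n -> Y)) :
  (forall i, fmap (fun v => v i) z = fmap (fun v => v i) z') -> z = z'.
Proof.
elim: n z z' => [|n IHn] z z' zz'.
  have [u uP] := nsa_terminal.
  pose k (_ : unit) (i : 'I_0) : Y := False_rect Y (notF (ltn_ord i)).
  have kK w : w = fmap k (fmap (fun _ => tt) w).
    by rewrite fmap_comp -{1}(fmap_id w); apply: fmap_ext => v; apply: funext => -[].
  by rewrite (kK z) (kK z') (uP (fmap _ z)) (uP (fmap _ z')).
pose split_tuple (v : 'I_n.+1 -> Y) := (v ord0, fun j => v (lift ord0 j)).
pose join_tuple (p : Y * ('I_n -> Y)) (i : 'I_n.+1) :=
  if unlift ord0 i is Some j then p.2 j else p.1.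
have splitK v : join_tuple (split_tuple v) = v.
  by apply: funext => i; rewrite /join_tuple; case: unliftP => [j ->|->].
have [unpair pairK _] := nsa_pair_bij Y ('I_n -> Y).
have : fmap split_tuple z = fmap split_tuple z'.
  apply: (can_inj pairK); congr (_, _); rewrite !fmap_comp; first exact: zz'.
  by apply: IHn => j; rewrite !fmap_comp; apply: zz'.
move=> /(congr1 (fmap join_tuple)); rewrite !fmap_comp.
by rewrite !(fmap_ext _ splitK) !fmap_id.
Qed.

Lemma fmap_eval_surj Y n (t : 'I_n -> F Y) :
  exists z, forall i, fmap (fun v => v i) z = t i.
Proof.
elim: n t => [|n IHn] t.
  have [u _] := nsa_terminal.
  by exists (fmap (fun _ (i : 'I_0) => False_rect Y (notF (ltn_ord i))) u) => -[].
pose join_tuple (p : Y * ('I_n -> Y)) (i : 'I_n.+1) :=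
  if unlift ord0 i is Some j then p.2 j else p.1.
have [w wP] := IHn (fun j => t (lift ord0 j)).
have [pair _ pairK] := nsa_pair_bij Y ('I_n -> Y).
case: (pairK (t ord0, w)) => pair1 pair2.
exists (fmap join_tuple (pair (t ord0, w))) => i; rewrite fmap_comp.
case: (unliftP ord0 i) => [j ->|->].
- rewrite -wP -[in RHS]pair2 fmap_comp.
  by apply: fmap_ext => p; rewrite /join_tuple liftK.
- by rewrite -[in RHS]pair1; apply: fmap_ext => p; rewrite /join_tuple unlift_none.
Qed.

Lemma nsa_equalizer_ex A Y (f g : A -> Y) (y : F A) : fmap f y = fmap g y ->
  exists z : F {a | f a = g a}, fmap (@sval _ _) z = y.
Proof. by case: HN => _ [_ [_ /(_ A Y f g)[_ ex]]]; apply: ex. Qed.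

End NSAFacts.

Section Comparison.
Variables (B E : Type) (L : ((E -> B) -> Prop) -> Prop).
Hypothesis HL : cyl_ultrafilter L.
Variables (F : Type -> Type) (fmap : forall X Y : Type, (X -> Y) -> F X -> F Y).
Hypotheses (HN : is_NSA fmap) (HC : confined fmap B).
Variable theta : E -> F B.
Hypothesis Htheta : lr_iso L fmap theta.

(* [z] is the element (theta e_1, ..., theta e_n) of *(B^n) = ( *B)^n. *)
Definition star_tuple n (e : 'I_n -> E) (z : F ('I_n -> B)) :=
  forall i, fmap (fun v => v i) z = theta (e i).

Lemma star_tuple_ex n (e : 'I_n -> E) : exists z, star_tuple e z.
Proof. exact: fmap_eval_surj. Qed.

Lemma star_tuple1 e :
  star_tuple (fun _ : 'I_1 => e) (fmap (fun b (_ : 'I_1) => b) (theta e)).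
Proof. by move=> i; rewrite (fmap_comp HN) (fmap_id HN). Qed.

(* Both sides say that z lies in the subobject {v | g1 v = g2 v} of B^n: on the
   left by preservation of equalizers, on the right by the isomorphism theta. *)
Lemma star_tuple_sameP n (e : 'I_n -> E) z : star_tuple e z ->
  forall X (g1 g2 : ('I_n -> B) -> X), fmap g1 z = fmap g2 z <->
  L (fun psi => g1 (fun i => psi (e i)) = g2 (fun i => psi (e i))).
Proof.
move=> ze X g1 g2; have [_ iso] := Htheta.
apply: (iff_trans _ (iff_sym (iso n e (fun v => g1 v = g2 v)))); split.
- move=> /(nsa_equalizer_ex HN)[r rz]; exists r => i.
  by rewrite -ze -rz (fmap_comp HN).
- move=> [r rP]; have rz : fmap (@sval _ _) r = z.
    by apply: (fmap_eval_inj HN) => i; rewrite ze -rP (fmap_comp HN).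
  by rewrite -rz !(fmap_comp HN); apply: fmap_ext => -[v].
Qed.

Lemma star_tupleP n1 n2 (e1 : 'I_n1 -> E) (e2 : 'I_n2 -> E) z1 z2 :
  star_tuple e1 z1 -> star_tuple e2 z2 ->
  forall X (f1 : ('I_n1 -> B) -> X) (f2 : ('I_n2 -> B) -> X), fmap f1 z1 = fmap f2 z2 <->
  L (fun psi => f1 (fun i => psi (e1 i)) = f2 (fun i => psi (e2 i))).
Proof.
move=> z1e z2e X f1 f2; have [w we] := star_tuple_ex (concat_index e1 e2).
have -> : z1 = fmap (fun v i => v (lshift n2 i)) w.
  by apply: (fmap_eval_inj HN) => i; rewrite z1e (fmap_comp HN) we concat_index_lshift.
have -> : z2 = fmap (fun v i => v (rshift n1 i)) w.
  by apply: (fmap_eval_inj HN) => i; rewrite z2e (fmap_comp HN) we concat_index_rshift.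
rewrite !(fmap_comp HN) (star_tuple_sameP we).
have -> // : (fun psi => f1 (fun i => psi (concat_index e1 e2 (lshift n2 i))) =
                        f2 (fun i => psi (concat_index e1 e2 (rshift n1 i)))) =
             (fun psi => f1 (fun i => psi (e1 i)) = f2 (fun i => psi (e2 i))).
apply: funext => psi; congr (f1 _ = f2 _); apply: funext => i;
  by rewrite ?concat_index_lshift ?concat_index_rshift.
Qed.

Lemma theta_star_tupleP n (e : 'I_n -> E) z : star_tuple e z ->
  forall X (f1 : B -> X) e1 (f2 : ('I_n -> B) -> X), fmap f1 (theta e1) = fmap f2 z <->
  L (fun psi => f1 (psi e1) = f2 (fun i => psi (e i))).
Proof.
move=> ze X f1 e1 f2; have -> : fmap f1 (theta e1) =
          fmap (fun v : 'I_1 -> B => f1 (v ord0)) (fmap (fun b (_ : 'I_1) => b) (theta e1)).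
  by rewrite (fmap_comp HN).
exact: star_tupleP (star_tuple1 e1) ze X _ _.
Qed.

Lemma theta_coord_surj X (x : F X) : exists (f : B -> X) (e : E), x = fmap f (theta e).
Proof.
have [[theta_inv _ theta_invK] _] := Htheta.
have [A' [j [jinj [y yx]]]] := HC x.
case: (pselectT {a | A' a}) => [A'0|a0]; first by case: (nsa_empty HN A'0 y).
have [jinv jinvK] : exists jinv : B -> {a | A' a}, forall w, jinv (j w) = w.
  have pre b : exists w, (exists w', j w' = b) -> j w = b.
    by have [[w' <-]|nb] := EM (exists w', j w' = b); [exists w'|exists a0 => /nb].
  have [jinv jinvP] := boolp.choice pre.
  by exists jinv => w; apply: jinj; apply: jinvP; exists w.
exists (fun b => sval (jinv b)), (theta_inv (fmap j y)); rewrite theta_invK.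
by rewrite -yx (fmap_comp HN); apply: fmap_ext => w; rewrite jinvK.
Qed.

Definition alpha_graph X (C : Star L X) (y : F X) :=
  exists n (e : 'I_n -> E) (f : ('I_n -> B) -> X) z,
    [/\ represents C (fun psi => f (fun i => psi (e i))), star_tuple e z & y = fmap f z].

Lemma alpha_graph_total X (C : Star L X) : exists y, alpha_graph C y.
Proof.
have [a ->] := star_class_surj C; have [n [e [f aE]]] := svalP a.
have [z ze] := star_tuple_ex e.
exists (fmap f z), n, e, f, z; split => //.
by rewrite -(funext aE); apply: represents_star_class.
Qed.

Definition alpha X (C : Star L X) : F X := sval (cid (alpha_graph_total C)).

Lemma alpha_spec X (C : Star L X) : alpha_graph C (alpha C).
Proof. exact: svalP (cid (alpha_graph_total C)). Qed.

Definition gamma_graph X (x : F X) (C : Star L X) :=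
  exists (f : B -> X) (e : E), x = fmap f (theta e) /\ represents C (fun psi => f (psi e)).

Lemma gamma_graph_total X (x : F X) : exists C, gamma_graph x C.
Proof.
have [f [e xfe]] := theta_coord_surj x.
exists (star_class L (exist _ _ (fin_dep_tuple (fun _ : 'I_1 => e) (fun v => f (v ord0))))).
by exists f, e; split => //; apply: represents_star_class.
Qed.

Definition gamma X (x : F X) : Star L X := sval (cid (gamma_graph_total x)).

Lemma gamma_spec X (x : F X) : gamma_graph x (gamma x).
Proof. exact: svalP (cid (gamma_graph_total x)). Qed.

Lemma alpha_formula X (C : Star L X) (phi : (E -> B) -> X) n (e : 'I_n -> E)
    (f : ('I_n -> B) -> X) :
  represents C phi -> (forall psi, phi psi = f (fun i => psi (e i))) ->
  forall z, star_tuple e z -> alpha C = fmap f z.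
Proof.
move=> Cphi /funext phiE z ze; rewrite phiE in Cphi.
have [n0 [e0 [f0 [z0 [C0 z0e0 ->]]]]] := alpha_spec C.
exact/(star_tupleP z0e0 ze)/(represents_eqL HL C0 Cphi).
Qed.

Lemma gamma_formula X (x : F X) (f : B -> X) (e : E) :
  x = fmap f (theta e) -> represents (gamma x) (fun psi => f (psi e)).
Proof.
have [f0 [e0 [x0 C0]]] := gamma_spec x; move=> x1.
apply: (represents_transfer HL C0
  (fin_dep_tuple (fun _ : 'I_1 => e) (fun v => f (v ord0)))).
apply: (iffLR (theta_star_tupleP (star_tuple1 e) f0 e0 (fun v => f (v ord0)))).
by rewrite -x0 x1 (fmap_comp HN).
Qed.

Lemma alpha_natural X Y (g : X -> Y) (C : Star L X) :
  alpha (starmap g C) = fmap g (alpha C).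
Proof.
have [n [e [f [z [Crep ze ->]]]]] := alpha_spec C.
rewrite (fmap_comp HN).
exact: (alpha_formula (f := fun v => g (f v)) (represents_starmap HL g Crep)
  (fun _ => erefl) ze).
Qed.

Lemma gamma_natural X Y (g : X -> Y) (x : F X) :
  gamma (fmap g x) = starmap g (gamma x).
Proof.
have [f [e [xfe Crep]]] := gamma_spec x.
apply: (represents_inj _ (represents_starmap HL g Crep)).
by apply: (gamma_formula (f := fun b => g (f b))); rewrite xfe (fmap_comp HN).
Qed.

Lemma alpha_gammaK X (x : F X) : alpha (gamma x) = x.
Proof.
have [f [e [xfe Crep]]] := gamma_spec x.
rewrite (alpha_formula (e := fun _ : 'I_1 => e) (f := fun v => f (v ord0)) Crep _
  (star_tuple1 e)) //.
by rewrite xfe (fmap_comp HN).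
Qed.

Lemma gamma_alphaK X (C : Star L X) : gamma (alpha C) = C.
Proof.
have [n [e [f [z [Crep ze aC]]]]] := alpha_spec C.
have [f0 [e0 [aC0 C0rep]]] := gamma_spec (alpha C).
apply: (represents_inj _ Crep); apply: (represents_transfer HL C0rep (fin_dep_tuple e f)).
by apply/(theta_star_tupleP ze); rewrite -aC0.
Qed.

End Comparison.

Theorem mainTheorem3 (B E : Type) (L : ((E -> B) -> Prop) -> Prop)
  (HB : ~ finite B) (HL : cyl_ultrafilter L) :
  (is_NSA (@starmap B E L) /\ confined (@starmap B E L) B) /\
  (forall (F : Type -> Type) (fmap : forall X Y : Type, (X -> Y) -> F X -> F Y),
    is_NSA fmap -> confined fmap B ->
    forall theta : E -> F B, lr_iso L fmap theta ->
    exists (alpha : forall X : Type, Star L X -> F X)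
           (gamma : forall X : Type, F X -> Star L X),
      (forall (X : Type) (C : Star L X) (phi : (E -> B) -> X) (n : nat)
              (e : 'I_n -> E) (f : ('I_n -> B) -> X),
         represents C phi ->
         (forall psi, phi psi = f (fun i => psi (e i))) ->
         forall z : F ('I_n -> B),
           (forall i, fmap _ _ (fun v : 'I_n -> B => v i) z = theta (e i)) ->
           alpha X C = fmap _ _ f z) /\
      (forall (X : Type) (x : F X) (f : B -> X) (e : E),
         x = fmap _ _ f (theta e) ->
         represents (gamma X x) (fun psi => f (psi e))) /\
      (forall (X Y : Type) (g : X -> Y) (C : Star L X),
         alpha Y (starmap g C) = fmap _ _ g (alpha X C)) /\
      (forall (X Y : Type) (g : X -> Y) (x : F X),
         gamma Y (fmap _ _ g x) = starmap g (gamma X x)) /\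
      (forall (X : Type) (x : F X), alpha X (gamma X x) = x) /\
      (forall (X : Type) (C : Star L X), gamma X (alpha X C) = C)).
Proof.
split; first by split; [exact: starmap_NSA | exact: starmap_confined].
move=> F fmap HN HC theta Htheta.
exists (fun X (C : Star L X) => alpha HN theta C),
       (fun X (x : F X) => gamma HN HC Htheta x).
split.
  move=> X C phi n e f Cphi phiE z.
  exact (alpha_formula HL HN Htheta Cphi phiE (z := z)).
split; first by move=> X x f e; exact (gamma_formula HL HN HC Htheta (e := e)).
split; first by move=> X Y g C; exact (alpha_natural HL HN Htheta g C).
split; first by move=> X Y g x; exact (gamma_natural HL HN HC Htheta g x).
split; first by move=> X x; exact (alpha_gammaK HL HN HC Htheta x).
by move=> X C; exact (gamma_alphaK HL HN HC Htheta C).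
Qed.
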